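(* Let $X$ be a finite alphabet with at least two letters and $k\ge2$. For every $F\in\mathcal F_{\mathcal T_k}$, $$\mathcal R\mathbf\Sigma(F)=\{A\circ f_{\mathcal M}\mid \mathcal M\text{ an automaton over }X,\ A:C_{\mathcal M}\to\bar k,\ A\in\mathcal C_{\mathcal M}(F)\}.$$
   Context: Automaton $\mathcal M=(Q,f,in)$: $f_{\mathcal M}(\xi)$ is the set of states visited infinitely often on input $\xi$, $C_{\mathcal M}=\{f_{\mathcal M}(\xi):\xi\in X^\omega\}$. On $C_{\mathcal M}$: $c\le_0 d$ iff some (equivalently every) state of $d$ is reachable from some (equivalently every) state of $c$; $c\le_1 d$ iff $c\supseteq d$. $\mathcal C_{\mathcal M}=(\mathcal C_0,\mathcal C_1)$ where $\mathcal C_i$ is the family of $\le_i$-up subsets of $C_{\mathcal M}$. $\mathcal R$ is the class of regular $\omega$-languages; $\mathcal R\mathbf\Sigma=(\mathcal R\cap\mathbf\Sigma^0_1,\mathcal R\cap\mathbf\Sigma^0_2)$ with $\mathbf\Sigma^0_1$ the open and $\mathbf\Sigma^0_2$ the countable unions of closed subsets of $X^\omega$. Forests: finite $F\subseteq\omega^+$ closed under nonempty prefixes; trees: finite prefix-closed $V\subseteq\omega^*$; $\mathcal F_{\mathcal T_k}$: forests $(F,c)$ whose labels $c(\tau)=(V,v)$ are $\bar k$-labeled trees. For a 2-base $\mathcal L=(\mathcal L_0,\mathcal L_1)$ in $S$ (families closed under finite $\cup,\cap$ containing $\emptyset,S$), an $F$-family is $\{U_\tau\}_{\tau\in F}\subseteq\mathcal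 L_0$ with $U_{\tau i}\subseteq U_\tau$, $\bigcup U_\tau=S$, plus for each $\tau$ with $c(\tau)=(V,v)$ sets $U_{\tau\sigma}=\tilde U_\tau\cap B_{\tau\sigma}$ ($B_{\tau\sigma}\in\mathcal L_1$, $\sigma\in V$) with $U_{\tau\sigma i}\subseteq U_{\tau\sigma}$, $\bigcup_\sigma U_{\tau\sigma}=\tilde U_\tau$, where $\tilde U_\tau=U_\tau\setminus\bigcup_{\tau i\in F}U_{\tau i}$; it determines $A:S\to\bar k$ if $A(x)=v(\sigma)$ whenever $x\in U_{\tau\sigma}\setminus\bigcup_{\sigma i\in V}U_{\tau\sigma i}$. $\mathcal L(F)$ is the set of $k$-partitions of $S$ determined by some $F$-family over $\mathcal L$; this defines both $\mathcal R\mathbf\Sigma(F)$ and $\mathcal C_{\mathcal M}(F)$. *)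

From mathcomp Require Import all_boot.
Set Implicit Arguments. Unset Strict Implicit. Unset Printing Implicit Defensive.

Section Automata.
Variable X : finType.

Fixpoint run (Q : finType) (f : Q -> X -> Q) (qin : Q) (xi : nat -> X) (n : nat) : Q :=
  match n with
  | 0 => qin
  | m.+1 => f (run f qin xi m) (xi m)
  end.

Definition fM (Q : finType) (f : Q -> X -> Q) (qin : Q) (xi : nat -> X) : Q -> Prop :=
  fun q => forall N, exists n, N <= n /\ run f qin xi n = q.

Definition CM (Q : finType) (f : Q -> X -> Q) (qin : Q) : Type :=
  {c : Q -> Prop | exists xi : nat -> X, fM f qin xi = c}.

Definition toCM (Q : finType) (f : Q -> X -> Q) (qin : Q) (xi : nat -> X) : CM f qin :=
  exist _ (fM f qin xi) (ex_intro _ xi erefl).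

Definition reachable (Q : finType) (f : Q -> X -> Q) (q q' : Q) : Prop :=
  exists w : seq X, foldl f q w = q'.

Definition le0 (Q : finType) (f : Q -> X -> Q) (qin : Q) (c d : CM f qin) : Prop :=
  exists q q', sval c q /\ sval d q' /\ reachable f q q'.

Definition le1 (Q : finType) (f : Q -> X -> Q) (qin : Q) (c d : CM f qin) : Prop :=
  forall q, sval d q -> sval c q.

Definition upset (S : Type) (le : S -> S -> Prop) (P : S -> Prop) : Prop :=
  forall c d, le c d -> P c -> P d.

(* the 2-base C_M = (C_0, C_1) of up-sets in C_M *)
Definition CM0 (Q : finType) (f : Q -> X -> Q) (qin : Q) (P : CM f qin -> Prop) : Prop :=
  upset (@le0 Q f qin) P.
Definition CM1 (Q : finType) (f : Q -> X -> Q) (qin : Q) (P : CM f qin -> Prop) : Prop :=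
  upset (@le1 Q f qin) P.

(* regular = recognized by a deterministic Muller automaton *)
Definition regular (L : (nat -> X) -> Prop) : Prop :=
  exists (Q : finType) (f : Q -> X -> Q) (qin : Q) (T : (Q -> Prop) -> Prop),
    forall xi, L xi <-> T (fM f qin xi).

Definition openw (L : (nat -> X) -> Prop) : Prop :=
  forall xi, L xi -> exists n, forall eta, (forall i, i < n -> eta i = xi i) -> L eta.

Definition closedw (L : (nat -> X) -> Prop) : Prop := openw (fun xi => ~ L xi).

Definition sigma2 (L : (nat -> X) -> Prop) : Prop :=
  exists C : nat -> (nat -> X) -> Prop,
    (forall n, closedw (C n)) /\ (forall xi, L xi <-> exists n, C n xi).

Definition RSigma0 (L : (nat -> X) -> Prop) : Prop := regular L /\ openw L.
Definition RSigma1 (L : (nat -> X) -> Prop) : Prop := regular L /\ sigma2 L.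

End Automata.

(* A forest (F, c) in F_{T_k}: F a finite set of nonempty nat-sequences closed
   under nonempty prefixes; c(tau) = (ftree tau, flab tau) a finite
   prefix-closed tree with labels in 'I_k. *)
Record forest (k : nat) := Forest {
  fF : seq (seq nat);
  ftree : seq nat -> seq (seq nat);
  flab : seq nat -> seq nat -> 'I_k;
  fF_nonempty : forall tau, tau \in fF -> tau != [::];
  fF_prefix : forall tau, tau \in fF -> forall n, 0 < n -> take n tau \in fF;
  ftree_prefix : forall tau, tau \in fF ->
     forall sigma, sigma \in ftree tau -> forall n, take n sigma \in ftree tau
}.

(* L(F): k-partitions of S determined by some F-family over the 2-base (L0, L1) *)
Definition LF (S : Type) (L0 L1 : (S -> Prop) -> Prop) (k : nat) (F : forest k)
  (A : S -> 'I_k) : Prop :=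
  exists (U : seq nat -> S -> Prop) (B : seq nat -> seq nat -> S -> Prop),
    let Ut := fun tau x => U tau x /\ ~ (exists i, rcons tau i \in fF F /\ U (rcons tau i) x) in
    let Us := fun tau sigma x => Ut tau x /\ B tau sigma x in
    (forall tau, tau \in fF F -> L0 (U tau)) /\
        (forall tau i x, tau \in fF F -> rcons tau i \in fF F -> U (rcons tau i) x -> U tau x) /\
        (forall x, exists2 tau, tau \in fF F & U tau x) /\
        (forall tau sigma, tau \in fF F -> sigma \in ftree F tau -> L1 (B tau sigma)) /\
        (forall tau sigma i x, tau \in fF F -> sigma \in ftree F tau ->
            rcons sigma i \in ftree F tau -> Us tau (rcons sigma i) x -> Us tau sigma x) /\
        (forall tau x, tau \in fF F -> Ut tau x ->
            exists2 sigma, sigma \in ftree F tau & Us tau sigma x) /\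
        (forall tau sigma x, tau \in fF F -> sigma \in ftree F tau -> Us tau sigma x ->
            ~ (exists i, rcons sigma i \in ftree F tau /\ Us tau (rcons sigma i) x) ->
            A x = flab F tau sigma).

(* Forward direction: an F-family over RΣ uses finitely many regular languages,
   and a product of their Muller automata gives one automaton M on which each set
   of the family, hence A, depends only through f_M; the family then descends to
   C_M.  An open member L descends to a <=_0-up-set: extend a prefix of ξc that
   forces membership in L until it reaches a state q of f_M(ξc), then walk to a
   state q' of f_M(ξd) and follow the tail of ξd; the result lies in L and has the
   same f_M as ξd.  A Σ^0_2 member L = ⋃ C_n descends to a <=_1-up-set by a Baire
   category argument: if f_M(ξd) ⊆ f_M(ξc), L ξc and ¬ L ξd, alternate longer and
   longer pieces of the tail of ξd, chosen so that stage n already leaves C_n for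
   good, with a fixed loop through all of f_M(ξc); the limit word has the same f_M
   as ξc but lies in no C_n.
   Backward direction: f_M-preimages of subsets of C_M are Muller recognisable,
   those of <=_0-up-sets are open, and that of a <=_1-up-set P is the union over n
   of the closed sets "from time n on, the run stays inside some c ∈ P". *)

From mathcomp Require Import all_boot zify.
From Stdlib Require Import Classical ProofIrrelevance FunctionalExtensionality
  PropExtensionality IndefiniteDescription.
Set Implicit Arguments. Unset Strict Implicit. Unset Printing Implicit Defensive.

Lemma finite_eventually (Q : finType) (R : Q -> nat -> Prop) :
  (forall q, exists N, forall n, N <= n -> R q n) ->
  exists N, forall q n, N <= n -> R q n.
Proof.
move=> /functional_choice [N HN]; exists (\max_q N q) => q n Hn.
by apply: HN; apply: leq_trans Hn; apply: leq_bigmax.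
Qed.

Lemma pred_ext (T : Type) (P P' : T -> Prop) : (forall x, P x <-> P' x) -> P = P'.
Proof.
by move=> E; apply: functional_extensionality => x; apply: propositional_extensionality.
Qed.

Lemma take_mkseq (T : Type) (g : nat -> T) t n : t <= n -> take t (mkseq g n) = mkseq g t.
Proof. by move=> Ht; rewrite /mkseq -map_take take_iota (minn_idPl Ht). Qed.

Section Limit.
Variables (T : Type) (x0 : T) (u0 : seq T) (h : nat -> seq T -> seq T).

Fixpoint iter_cat n := if n is m.+1 then iter_cat m ++ h m (iter_cat m) else u0.

Definition limit_word : nat -> T := fun i => nth x0 (iter_cat i.+1) i.

Lemma iter_cat_prefix n m : n <= m -> exists v, iter_cat m = iter_cat n ++ v.
Proof.
elim: m => [|m IH] Hnm; first by rewrite (_ : n = 0); [exists [::]; rewrite cats0 | lia].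
have [->|Hn] := eqVneq n m.+1; first by exists [::]; rewrite cats0.
have [|v Hv] := IH; first lia.
by exists (v ++ h m (iter_cat m)); rewrite /= Hv catA.
Qed.

Hypothesis h_nonempty : forall m u, 0 < size (h m u).

Lemma size_iter_cat n : n <= size (iter_cat n).
Proof. by elim: n => [//|n IH] /=; rewrite size_cat; have := h_nonempty n (iter_cat n); lia. Qed.

Lemma nth_limit_word n i : i < size (iter_cat n) -> limit_word i = nth x0 (iter_cat n) i.
Proof.
move=> Hi; rewrite /limit_word.
have [Hn|Hn] := leqP n i.+1.
  by have [v ->] := iter_cat_prefix Hn; rewrite nth_cat Hi.
have [v ->] := iter_cat_prefix (ltnW Hn).
by rewrite nth_cat (leq_trans _ (size_iter_cat i.+1)).
Qed.

End Limit.

Definition catw (T : Type) (u : seq T) (xi : nat -> T) : nat -> T :=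
  fun i => if i < size u then nth (xi 0) u i else xi (i - size u).

Section Runs.
Variables (X Q : finType) (f : Q -> X -> Q).

Lemma run_ext q (xi eta : nat -> X) n :
  (forall i, i < n -> eta i = xi i) -> run f q eta n = run f q xi n.
Proof.
elim: n => [//|n IH] E /=.
rewrite E // IH // => i Hi.
by apply: E; lia.
Qed.

Lemma run_shift q (xi : nat -> X) m n :
  run f q xi (m + n) = run f (run f q xi m) (fun i => xi (m + i)) n.
Proof. by elim: n => [|n IH]; rewrite ?addn0 // addnS /= IH. Qed.

Lemma foldl_mkseq q (xi : nat -> X) n : foldl f q (mkseq xi n) = run f q xi n.
Proof. by elim: n => [//|n IH]; rewrite mkseqS foldl_rcons IH. Qed.

Lemma run_catw_take q u xi t :
  t <= size u -> run f q (catw u xi) t = foldl f q (take t u).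
Proof.
elim: t => [|t IH] Ht /=; first by rewrite take0.
rewrite IH; last lia.
by rewrite (take_nth (xi 0)) // foldl_rcons /catw Ht.
Qed.

Lemma run_catw_shift q u xi n :
  run f q (catw u xi) (size u + n) = run f (foldl f q u) xi n.
Proof.
rewrite run_shift run_catw_take // take_size.
by apply: run_ext => i _; rewrite /catw ltnNge leq_addr /= addKn.
Qed.

Lemma fM_tail q1 q2 (xi1 xi2 : nat -> X) m :
  (forall n, run f q1 xi1 (m + n) = run f q2 xi2 n) -> fM f q1 xi1 = fM f q2 xi2.
Proof.
move=> E; apply: pred_ext => s; split => Hs N.
- have [n [Hn <-]] := Hs (m + N).
  exists (n - m); split; first lia.
  by rewrite -E subnKC //; lia.
- have [n [Hn <-]] := Hs N.
  by exists (m + n); rewrite E; split => //; lia.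
Qed.

Lemma fM_shift q (xi : nat -> X) m :
  fM f q xi = fM f (run f q xi m) (fun i => xi (m + i)).
Proof. by apply: (fM_tail (m := m)) => n; apply: run_shift. Qed.

Lemma fM_catw q u (xi : nat -> X) : fM f q (catw u xi) = fM f (foldl f q u) xi.
Proof. by apply: (fM_tail (m := size u)) => n; apply: run_catw_shift. Qed.

Lemma fM_run_eventually q (xi : nat -> X) :
  exists m, forall t, m <= t -> fM f q xi (run f q xi t).
Proof.
have [N HN] : exists N, forall s n, N <= n -> fM f q xi s \/ run f q xi n <> s.
  apply: finite_eventually => s.
  have [Hs|/not_all_ex_not [N HN]] := classic (fM f q xi s); first by exists 0; left.
  by exists N => n Hn; right => Hr; apply: HN; exists n.
by exists N => t Ht; case: (HN (run f q xi t) t Ht).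
Qed.

Lemma run_visits_within q (xi : nat -> X) n :
  exists N, forall s, (exists t, n <= t /\ run f q xi t = s) ->
    exists t, n <= t < N /\ run f q xi t = s.
Proof.
have [N HN] : exists N, forall s N', N <= N' -> (exists t, n <= t /\ run f q xi t = s) ->
    exists t, n <= t < N' /\ run f q xi t = s.
  apply: finite_eventually => s.
  have [[t [Ht Hr]]|Hs] := classic (exists t, n <= t /\ run f q xi t = s); last first.
    by exists 0 => N' _ /Hs.
  by exists t.+1 => N' HN' _; exists t; split => //; lia.
by exists N => s; apply: HN.
Qed.

Lemma fM_loop q (xi : nat -> X) p : fM f q xi p ->
  exists w : seq X, [/\ 0 < size w, foldl f p w = p,
    forall t, t <= size w -> fM f q xi (foldl f p (take t w)) &
    forall s, fM f q xi s -> exists2 t, t <= size w & foldl f p (take t w) = s].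
Proof.
move=> Hp.
have [m Hm] := fM_run_eventually q xi.
have [t1 [Ht1 Hr1]] := Hp m.
have [N HN] := run_visits_within q xi t1.
have [t2 [Ht2 Hr2]] := Hp N.
have [t [/andP [Ht HtN] _]] := HN p (ex_intro _ t1 (conj (leqnn _) Hr1)).
set w := mkseq (fun i => xi (t1 + i)) (t2 - t1).
have size_w : size w = t2 - t1 by rewrite size_mkseq.
have take_w t' : t' <= size w -> foldl f p (take t' w) = run f q xi (t1 + t').
  move=> Ht'; rewrite take_mkseq; last by rewrite -size_w.
  by rewrite foldl_mkseq -Hr1 -run_shift.
exists w; split.
- lia.
- by rewrite -(take_size w) take_w // size_w subnKC //; lia.
- by move=> t' Ht'; rewrite take_w //; apply: Hm; lia.
- move=> s Hs; have [t' [/andP [Ht' Ht'N] <-]] := HN s (Hs t1).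
  have Hw : t' - t1 <= size w by rewrite size_w; lia.
  by exists (t' - t1); rewrite // take_w // subnKC.
Qed.

End Runs.

Section Invariance.
Variable X : finType.

Definition fM_invariant (Q : finType) (f : Q -> X -> Q) (qin : Q)
    (L : (nat -> X) -> Prop) :=
  forall xi xi', fM f qin xi = fM f qin xi' -> L xi -> L xi'.

Section Morphism.
Variables (Q Q' : finType) (f : Q -> X -> Q) (f' : Q' -> X -> Q') (g : Q -> Q').
Hypothesis g_morph : forall q x, g (f q x) = f' (g q) x.

Lemma fM_morph q xi b : fM f' (g q) xi b <-> exists2 a, g a = b & fM f q xi a.
Proof.
have run_g n : run f' (g q) xi n = g (run f q xi n) by elim: n => //= n ->.
split => [Hb|[a <- Ha] N]; last first.
  by have [n [Hn <-]] := Ha N; exists n; rewrite run_g.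
apply: NNPP => Hnone.
have [N HN] : exists N, forall a n, N <= n -> g a = b -> run f q xi n <> a.
  apply: finite_eventually => a.
  have [Ha|/not_all_ex_not [N HN]] := classic (fM f q xi a).
    by exists 0 => n _ Hab; case: Hnone; exists a.
  by exists N => n Hn _ Hr; apply: HN; exists n.
have [n [Hn Hr]] := Hb N; rewrite run_g in Hr.
exact: HN _ n Hn Hr erefl.
Qed.

Lemma fM_morph_eq q xi xi' :
  fM f q xi = fM f q xi' -> fM f' (g q) xi = fM f' (g q) xi'.
Proof. by move=> E; apply: pred_ext => b; rewrite !fM_morph E. Qed.

End Morphism.

Definition common_automaton (D : ((nat -> X) -> Prop) -> Prop) :=
  exists (Q : finType) (f : Q -> X -> Q) (qin : Q), forall L, D L -> fM_invariant f qin L.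

Lemma common_automaton1 L : regular L -> common_automaton (fun L' => L' = L).
Proof.
by move=> [Q [f [qin [T HT]]]]; exists Q, f, qin => _ -> xi xi' E; rewrite !HT E.
Qed.

Lemma common_automatonU D1 D2 :
  common_automaton D1 -> common_automaton D2 -> common_automaton (fun L => D1 L \/ D2 L).
Proof.
move=> [Q1 [f1 [q1 H1]]] [Q2 [f2 [q2 H2]]].
pose f p x := (f1 p.1 x, f2 p.2 x).
exists (Q1 * Q2)%type, f, (q1, q2) => L [HL|HL] xi xi' E.
- exact: (H1 L HL) (fM_morph_eq (g := fst) _ E).
- exact: (H2 L HL) (fM_morph_eq (g := snd) _ E).
Qed.

Lemma common_automaton_seq (T : eqType) (s : seq T) D :
  (forall t, t \in s -> common_automaton (D t)) ->
  common_automaton (fun L => exists2 t, t \in s & D t L).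
Proof.
elim: s => [|a s IH] Hs.
  by exists unit, (fun _ _ => tt), tt => L [].
have [|Q [f [qin H]]] := common_automatonU (Hs a (mem_head a s)) (IH _).
  by move=> t Ht; apply: Hs; rewrite in_cons Ht orbT.
exists Q, f, qin => L [t]; rewrite in_cons => /orP [/eqP -> | Ht] HL; apply: H.
  by left.
by right; exists t.
Qed.

End Invariance.

Lemma exists_maximal_rcons (s : seq (seq nat)) (P : seq nat -> Prop) t0 :
  t0 \in s -> P t0 ->
  exists2 t, t \in s & P t /\ ~ (exists i, rcons t i \in s /\ P (rcons t i)).
Proof.
pose M := \max_(t <- s) size t.
have [n Hn] : exists n, M - size t0 <= n by exists (M - size t0).
elim: n t0 Hn => [|n IH] t Hn Ht Pt.
all: have [[i [Hi Pi]]|] := classic (exists i, rcons t i \in s /\ P (rcons t i));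
  last by exists t.
all: have := leq_bigmax_seq (P := xpredT) (F := size) _ Hi isT; rewrite size_rcons -/M.
- lia.
- by move=> HM; apply: (IH (rcons t i)) => //; rewrite size_rcons; lia.
Qed.

Section Families.
Variables (k : nat) (F : forest k).

Lemma LF_comap (S S' : Type) (L0 L1 : (S -> Prop) -> Prop)
    (L0' L1' : (S' -> Prop) -> Prop) (g : S' -> S) (A : S -> 'I_k) :
  (forall P, L0 P -> L0' (fun s => P (g s))) ->
  (forall P, L1 P -> L1' (fun s => P (g s))) ->
  LF L0 L1 F A -> LF L0' L1' F (fun s => A (g s)).
Proof.
move=> H0 H1 [U [B [HU [HUsub [HUcov [HB [HBsub [HBcov HA]]]]]]]].
exists (fun tau s => U tau (g s)), (fun tau sigma s => B tau sigma (g s)).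
split; first by move=> tau /HU /H0.
split; first by move=> tau i s; apply: HUsub.
split; first by move=> s; apply: HUcov.
split; first by move=> tau sigma Htau /(HB _ _ Htau) /H1.
split; first by move=> tau sigma i s; apply: HBsub.
split; first by move=> tau s; apply: HBcov.
by move=> tau sigma s; apply: HA.
Qed.

Lemma LF_determined (S : Type) (L0 L1 : (S -> Prop) -> Prop) (A : S -> 'I_k) x y :
  LF L0 L1 F A ->
  (forall P, L0 P -> P x <-> P y) -> (forall P, L1 P -> P x <-> P y) ->
  A x = A y.
Proof.
move=> [U [B [HU [_ [HUcov [HB [_ [HBcov HA]]]]]]]] E0 E1.
have [tau0 Htau0 U0x] := HUcov x.
have [tau Htau [Ux Umax]] := exists_maximal_rcons (P := fun t => U t x) Htau0 U0x.
have [sigma0 Hsigma0 B0x] := HBcov tau x Htau (conj Ux Umax).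
have [sigma Hsigma [[_ Bx] Bmax]] :=
  exists_maximal_rcons (P := fun s => (U tau x /\ ~ _) /\ B tau s x) Hsigma0 B0x.
rewrite (HA tau sigma x) //.
symmetry; apply: HA => //.
- split; last exact: (E1 _ (HB _ _ Htau Hsigma)).1 Bx.
  split; first exact: (E0 _ (HU _ Htau)).1 Ux.
  move=> [i [Hi Uiy]]; apply: Umax; exists i.
  by split; last exact: (E0 _ (HU _ Hi)).2 Uiy.
- move=> [i [Hi [_ Biy]]]; apply: Bmax; exists i.
  by split; last split; last exact: (E1 _ (HB _ _ Htau Hi)).2 Biy.
Qed.

Lemma LF_common_automaton (X : finType) (L0 L1 : ((nat -> X) -> Prop) -> Prop)
    (A : (nat -> X) -> 'I_k) :
  (forall L, L0 L -> regular L) -> (forall L, L1 L -> regular L) ->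
  LF L0 L1 F A ->
  exists (Q : finType) (f : Q -> X -> Q) (qin : Q),
    LF (fun L => L0 L /\ fM_invariant f qin L) (fun L => L1 L /\ fM_invariant f qin L) F A.
Proof.
move=> R0 R1 [U [B [HU [HUsub [HUcov [HB HBrest]]]]]].
have [Q [f [qin Hinv]]] : common_automaton (fun L => exists2 tau, tau \in fF F &
    L = U tau \/ exists2 sigma, sigma \in ftree F tau & L = B tau sigma).
  apply: common_automaton_seq => tau Htau; apply: common_automatonU.
    exact/common_automaton1/R0/HU.
  by apply: common_automaton_seq => sigma Hsigma; apply/common_automaton1/R1/HB.
exists Q, f, qin, U, B.
split; first by move=> tau Htau; split; [apply: HU | apply: Hinv; exists tau => //; left].
split; first exact: HUsub.
split; first exact: HUcov.
split; last exact: HBrest.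
move=> tau sigma Htau Hsigma; split; first exact: HB.
by apply: Hinv; exists tau => //; right; exists sigma.
Qed.

End Families.

Section Interleave.
Variables (X Q : finType) (f : Q -> X -> Q) (qin p : Q) (S : Q -> Prop).
Variables (u0 w : seq X) (xi : nat -> X) (g : nat -> seq X -> nat).
Hypotheses (u0_p : foldl f qin u0 = p) (w_loop : foldl f p w = p) (w_nonempty : 0 < size w).
Hypothesis xi_return : forall n u, run f p xi (g n u) = p.
Hypotheses (xi_in_S : forall t, S (run f p xi t))
  (w_in_S : forall t, t <= size w -> S (foldl f p (take t w)))
  (w_covers_S : forall s, S s -> exists2 t, t <= size w & foldl f p (take t w) = s).

Definition stage_block n u := mkseq xi (g n u) ++ w.
Definition stage := iter_cat u0 stage_block.
Definition staged_word := limit_word (xi 0) u0 stage_block.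

Lemma stageS n : stage n.+1 = stage n ++ stage_block n (stage n).
Proof. by []. Qed.

Lemma stage_nonempty n u : 0 < size (stage_block n u).
Proof. by rewrite size_cat addn_gt0 w_nonempty orbT. Qed.

Lemma foldl_take_stage_block n u t :
  foldl f p (take t (stage_block n u)) =
  if t < g n u then run f p xi t else foldl f p (take (t - g n u) w).
Proof.
rewrite take_cat size_mkseq; case: ifP => Ht.
  by rewrite take_mkseq ?foldl_mkseq // ltnW.
by rewrite foldl_cat foldl_mkseq xi_return.
Qed.

Lemma stage_block_in_S n u t :
  t <= size (stage_block n u) -> S (foldl f p (take t (stage_block n u))).
Proof.
rewrite foldl_take_stage_block size_cat size_mkseq; case: ifP => // Ht Hsize.
by apply: w_in_S; lia.
Qed.

Lemma foldl_stage n : foldl f qin (stage n) = p.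
Proof.
elim: n => [//|n IH].
by rewrite stageS foldl_cat IH foldl_cat foldl_mkseq xi_return.
Qed.

Lemma staged_word_catw n i :
  i < size (stage n) + g n (stage n) -> staged_word i = catw (stage n) xi i.
Proof.
move=> Hi; rewrite /staged_word (nth_limit_word (n := n.+1) _ stage_nonempty) -/stage.
  rewrite stageS nth_cat /catw; case: ifP => // Hn.
  by rewrite nth_cat size_mkseq ifT ?nth_mkseq //; lia.
by rewrite -/stage stageS size_cat size_cat size_mkseq; lia.
Qed.

Lemma run_staged_word n t :
  t <= size (stage n) -> run f qin staged_word t = foldl f qin (take t (stage n)).
Proof.
move=> Ht; rewrite -(run_catw_take f qin xi Ht); apply: run_ext => i Hi.
by rewrite (staged_word_catw (n := n)) //; lia.
Qed.

Lemma run_staged_word_block n t : size (stage n) <= t <= size (stage n.+1) ->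
  run f qin staged_word t = foldl f p (take (t - size (stage n)) (stage_block n (stage n))).
Proof.
move=> /andP [Hlo Hhi]; rewrite (run_staged_word Hhi) stageS take_cat.
by rewrite ltnNge Hlo /= foldl_cat foldl_stage.
Qed.

Lemma run_staged_word_in_S t : size u0 <= t -> S (run f qin staged_word t).
Proof.
suff: forall n, size u0 <= t <= size (stage n) -> S (run f qin staged_word t).
  by move=> Hn Ht; apply: (Hn t); rewrite Ht (size_iter_cat u0 stage_nonempty t).
elim=> [|n IH] Ht.
  rewrite /stage /= in Ht; rewrite (_ : t = size u0); last lia.
  rewrite (run_staged_word (n := 0)) // /stage /= take_size u0_p.
  by have := w_in_S (leq0n _); rewrite take0.
have [Hn|Hn] := leqP t (size (stage n)); first by apply: IH; lia.
rewrite (run_staged_word_block (n := n)); last by rewrite (ltnW Hn); case/andP: Ht.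
by apply: stage_block_in_S; rewrite stageS size_cat in Ht; lia.
Qed.

Lemma fM_staged_word : fM f qin staged_word = S.
Proof.
apply: pred_ext => s; split => [Hs|/w_covers_S [t Ht <-] N].
  by have [t [Ht <-]] := Hs (size u0); apply: run_staged_word_in_S.
have HN : N <= size (stage N) := size_iter_cat u0 stage_nonempty N.
exists (size (stage N) + g N (stage N) + t); split; first lia.
rewrite (run_staged_word_block (n := N)); last by rewrite stageS size_cat size_cat size_mkseq; lia.
rewrite (_ : _ + t - _ = g N (stage N) + t); last lia.
by rewrite foldl_take_stage_block ltnNge leq_addr /= addKn.
Qed.

End Interleave.

Section AutomatonSets.
Variables (X Q : finType) (f : Q -> X -> Q) (qin : Q).

Lemma regular_toCM (P : CM f qin -> Prop) : regular (fun xi => P (toCM f qin xi)).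
Proof.
exists Q, f, qin, (fun c => exists h : (exists xi, fM f qin xi = c), P (exist _ c h)) => xi.
pose h0 := ex_intro (fun xi' => fM f qin xi' = fM f qin xi) xi erefl.
split=> [Pxi|[h]]; first by exists h0.
by rewrite (proof_irrelevance _ h h0).
Qed.

Lemma openw_CM0 (P : CM f qin -> Prop) : CM0 P -> openw (fun xi => P (toCM f qin xi)).
Proof.
move=> P_up xi Pxi; have [m Hm] := fM_run_eventually f qin xi.
exists m => eta Heta; apply: (P_up (toCM f qin xi)) Pxi.
have [m' Hm'] := fM_run_eventually f qin eta.
exists (run f qin xi m), (run f qin eta (maxn m m')); split; first exact: Hm.
split; first by apply: Hm'; apply: leq_maxr.
exists (mkseq (fun i => eta (m + i)) (maxn m m' - m)).
by rewrite foldl_mkseq -(run_ext _ _ Heta) -run_shift subnKC // leq_maxl.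
Qed.

Lemma sigma2_CM1 (P : CM f qin -> Prop) : CM1 P -> sigma2 (fun xi => P (toCM f qin xi)).
Proof.
move=> P_down.
exists (fun n xi => exists c : CM f qin, P c /\ forall t, n <= t -> sval c (run f qin xi t)).
split=> [n xi NC|xi]; last split.
- have [N HN] := run_visits_within f qin xi n.
  exists N => eta Heta [c [Pc Hc]]; apply: NC; exists c; split => // t Ht.
  have [t' [/andP [Ht' Ht'N] <-]] := HN _ (ex_intro _ t (conj Ht erefl)).
  by rewrite -(@run_ext _ _ f qin xi eta) => [|i Hi]; [apply: Hc | apply: Heta; lia].
- by move=> Pxi; have [m Hm] := fM_run_eventually f qin xi; exists m, (toCM f qin xi).
- move=> [n [c [Pc Hc]]]; apply: (P_down c) Pc => q Hq.
  by have [t [Ht <-]] := Hq n; apply: Hc.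
Qed.

Lemma fM_invariant_openw_reachable (L : (nat -> X) -> Prop) xc xd q q' :
  openw L -> fM_invariant f qin L -> L xc ->
  fM f qin xc q -> fM f qin xd q' -> reachable f q q' -> L xd.
Proof.
move=> L_open L_inv Lxc Hq Hq' [w Hw].
have [l Hl] := L_open xc Lxc.
have [t [Ht Hrt]] := Hq l.
have [m [_ Hrm]] := Hq' 0.
set eta := catw (mkseq xc t ++ w) (fun i => xd (m + i)).
apply: (L_inv eta); last first.
  apply: Hl => i Hi; rewrite /eta /catw size_cat size_mkseq ifT; last lia.
  by rewrite nth_cat size_mkseq ifT ?nth_mkseq //; lia.
by rewrite fM_catw foldl_cat foldl_mkseq Hrt Hw -Hrm -fM_shift.
Qed.

Lemma fM_invariant_sigma2_subset (L : (nat -> X) -> Prop) xc xd :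
  sigma2 L -> fM_invariant f qin L -> L xc ->
  (forall q, fM f qin xd q -> fM f qin xc q) -> L xd.
Proof.
move=> [C [C_closed HL]] L_inv Lxc sub; apply: NNPP => Nxd.
have [m0 Hm0] := fM_run_eventually f qin xd.
set p := run f qin xd m0; set xid := fun i => xd (m0 + i).
have fM_xid : fM f qin xd = fM f p xid := fM_shift f qin xd m0.
have p_xid : fM f p xid p by rewrite -fM_xid; apply: Hm0.
have [w [w_nonempty w_loop w_in w_covers]] := fM_loop (sub _ (Hm0 _ (leqnn m0))).
(* Stage n: follow ξd from p until C n is left for good, then come back to p. *)
have escape n u : exists j, (foldl f qin u = p -> forall eta,
    (forall i, i < size u + j -> eta i = catw u xid i) -> ~ C n eta) /\ run f p xid j = p.
  have [Hu|] := classic (foldl f qin u = p); last by have [j [_ Hj]] := p_xid 0; exists j.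
  have NC : ~ C n (catw u xid).
    move=> Cn; apply: Nxd; apply: (L_inv (catw u xid)); last by apply/HL; exists n.
    by rewrite fM_catw Hu fM_xid.
  have [l Hl] := C_closed n _ NC.
  have [j [Hj Hrj]] := p_xid l.
  by exists j; split => // _ eta Heta; apply: Hl => i Hi; apply: Heta; lia.
have [g Hg] := functional_choice _ (fun n => functional_choice _ (escape n)).
set eta := staged_word (mkseq xd m0) w xid g.
have fM_eta : fM f qin eta = fM f qin xc.
  apply: (fM_staged_word (p := p)) => //; first by rewrite foldl_mkseq.
  - by move=> n u; case: (Hg n u).
  - by move=> t; apply/sub; rewrite /p /xid -run_shift; apply/Hm0/leq_addr.
have [n Cn] := (HL eta).1 (L_inv _ _ (esym fM_eta) Lxc).
have [escape_n _] := Hg n (stage (mkseq xd m0) w xid g n).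
apply: (escape_n _ eta _ Cn) => [|i Hi].
  by apply: foldl_stage; rewrite ?foldl_mkseq // => n' u; case: (Hg n' u).
exact: staged_word_catw.
Qed.

End AutomatonSets.

Theorem proposition4p15 (X : finType) (k : nat) (F : forest k) :
  1 < #|X| -> 2 <= k ->
  forall A : (nat -> X) -> 'I_k,
    LF (@RSigma0 X) (@RSigma1 X) F A <->
    exists (Q : finType) (f : Q -> X -> Q) (qin : Q) (B : CM f qin -> 'I_k),
      LF (@CM0 X Q f qin) (@CM1 X Q f qin) F B /\
      A = (fun xi => B (toCM f qin xi)).
Proof.
move=> _ _ A; split.
- move=> /LF_common_automaton [L [] // | L [] // | Q [f [qin LFA]]].
  pose rep (c : CM f qin) := sval (constructive_indefinite_description _ (svalP c)).
  have fM_rep c : fM f qin (rep c) = sval c :=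
    svalP (constructive_indefinite_description _ (svalP c)).
  exists Q, f, qin, (fun c => A (rep c)); split.
    apply: (LF_comap _ _ LFA) => L [[_ L_topo] L_inv] c d Hcd Lc.
      have [q [q' [Hq [Hq' Hqq']]]] := Hcd.
      by apply: (fM_invariant_openw_reachable L_topo L_inv Lc _ _ Hqq'); rewrite fM_rep.
    apply: (fM_invariant_sigma2_subset L_topo L_inv Lc) => q.
    by rewrite !fM_rep; apply: Hcd.
  apply: functional_extensionality => xi.
  by apply: (LF_determined LFA) => L [_ L_inv]; split; apply: L_inv; rewrite fM_rep.
- move=> [Q [f [qin [B [LFB ->]]]]].
  apply: (LF_comap _ _ LFB) => P HP;
    split; by [apply: regular_toCM | apply: openw_CM0 | apply: sigma2_CM1].
Qed.
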